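(* Let $d>0$ be square-free, $r$ a positive divisor of $d$, $s=-d/r$, and $u,v\in\mathbb{Z}$ with $us-vr=1$; set $\sigma_r=\begin{pmatrix}\sqrt{-d}&r\\ vr&u\sqrt{-d}\end{pmatrix}$. Let $m,c\in\mathbb{Z}$ with $0<m<d/2$ and $0<m^2-dc<d/4$, and $A=\begin{pmatrix}d&m\sqrt{-d}\\ -m\sqrt{-d}&dc\end{pmatrix}$. Then $\sigma_r^*A\sigma_r$ corresponds to an orientable embedded totally geodesic surface in $\Omega_d$.
   Context: $\mathcal{O}_d$ is the ring of integers of $\mathbb{Q}(\sqrt{-d})$, $\Gamma_d=\mathrm{PSL}(2,\mathcal{O}_d)$, $\Omega_d=\mathbb{H}^3/\Gamma_d$; $\sigma^*$ is conjugate transpose. A Hermitian matrix $A'$ corresponds to the totally geodesic surface in $\Omega_d$ that is the image of the hyperbolic plane $H$ bounded by the circle $\mathcal{C}=\{z:(z\ 1)A'(\bar z\ 1)^T=0\}$ (for $A'=\sigma_r^*A\sigma_r$ this circle is the image under the Möbius map $\sigma_r^{-1}$ of the circle of $A$). The surface is embedded if for all $\gamma\in\Gamma_d$, $\gamma H=H$ or $\gamma H\cap H=\emptyset$; it is orientable if no element of $\Gamma_d$ preserving $\mathcal{C}$ interchanges the two components of $(\mathbb{C}\cup\{\infty\})\setminus\mathcal{C}$. *)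

From mathcomp Require Import all_boot all_order all_algebra.
From mathcomp Require Import complex Rstruct.
From Stdlib Require Import Reals.
Set Implicit Arguments. Unset Strict Implicit. Unset Printing Implicit Defensive.
Import GRing.Theory Num.Theory.
Local Open Scope ring_scope.

Definition C : numClosedFieldType := R[i].

Definition squarefree (d : nat) : Prop := forall p : nat, prime p -> ~~ dvdn (p * p)%N d.

(* sqrt(-d) in C (the root i*sqrt d) *)
Definition sqrt_md (d : nat) : C := sqrtC (- (d%:R)).

Definition omega (d : nat) : C :=
  if modn d 4 == 3%N then (1 + sqrt_md d) / 2%:R else sqrt_md d.
Definition in_Od (d : nat) (x : C) : Prop :=
  exists a b : int, x = a%:~R + b%:~R * omega d.

Definition i0 : 'I_2 := ord0.
Definition i1 : 'I_2 := ord_max.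

Definition mx2 (a b c e : C) : 'M[C]_2 :=
  \matrix_(i < 2, j < 2)
    if i == i0 then (if j == i0 then a else b) else (if j == i0 then c else e).

Definition ctrmx (m n : nat) (A : 'M[C]_(m, n)) : 'M[C]_(n, m) := map_mx Num.conj (A^T).

(* elements of SL(2, O_d); Gamma_d = PSL(2,O_d) acts on H^3 and on the
   Riemann sphere through these matrices (the kernel {+-1} acts trivially) *)
Definition in_SL2Od (d : nat) (g : 'M[C]_2) : Prop :=
  (forall i j, in_Od d (g i j)) /\ \det g = 1.

(* upper half space model H^3 = { (z, t) : z in C, t real, t > 0 } ; t is
   stored as an element of C with 0 < t (so t is a positive real) *)
Definition point := (C * C)%type.
Definition inH3 (p : point) : Prop := 0 < p.2.

(* Poincare extension of the Moebius transformation g to H^3 *)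
Definition act (g : 'M[C]_2) (p : point) : point :=
  let a := g i0 i0 in let b := g i0 i1 in let c := g i1 i0 in let e := g i1 i1 in
  let z := p.1 in let t := p.2 in
  let den := (c * z + e) * (c * z + e)^* + c * c^* * t ^+ 2 in
  (((a * z + b) * (c * z + e)^* + a * c^* * t ^+ 2) / den, t / den).

(* Hermitian matrix giving a genuine circle *)
Definition is_circle (A : 'M[C]_2) : Prop := ctrmx A = A /\ \det A < 0.

(* the hyperbolic plane H in H^3 bounded by the circle
   C = { z : (z 1) A (conj z 1)^T = 0 }, i.e. the hemisphere / vertical half-plane
   A00 (|z|^2 + t^2) + A10 conj z + A01 z + A11 = 0 *)
Definition plane (A : 'M[C]_2) (p : point) : Prop :=
  inH3 p /\
  A i0 i0 * (p.1 * p.1^* + p.2 ^+ 2) + A i1 i0 * p.1^* + A i0 i1 * p.1 + A i1 i1 = 0.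

Definition image_pt (g : 'M[C]_2) (S : point -> Prop) (q : point) : Prop :=
  exists p, S p /\ q = act g p.

Definition embedded (d : nat) (A : 'M[C]_2) : Prop :=
  forall g, in_SL2Od d g ->
    (forall q, image_pt g (plane A) q <-> plane A q) \/
    (forall q, ~ (image_pt g (plane A) q /\ plane A q)).

(* Riemann sphere = P^1(C), represented by nonzero column vectors w
   (z <-> (z,1), infinity <-> (1,0)); g acts by w |-> g w.
   The value of the form at w is w^T A conj(w), i.e. (z 1) A (conj z 1)^T. *)
Definition hform (A : 'M[C]_2) (w : 'cV[C]_2) : C :=
  ((w^T *m A *m map_mx Num.conj w) ord0 ord0).

Definition on_circle (A : 'M[C]_2) (w : 'cV[C]_2) : Prop := w != 0 /\ hform A w = 0.
Definition pos_side (A : 'M[C]_2) (w : 'cV[C]_2) : Prop := w != 0 /\ 0 < hform A w.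
Definition neg_side (A : 'M[C]_2) (w : 'cV[C]_2) : Prop := w != 0 /\ hform A w < 0.

Definition image_vec (g : 'M[C]_2) (S : 'cV[C]_2 -> Prop) (w : 'cV[C]_2) : Prop :=
  exists w0, S w0 /\ w = g *m w0.

Definition preserves_circle (g A : 'M[C]_2) : Prop :=
  forall w, image_vec g (on_circle A) w <-> on_circle A w.

Definition interchanges_sides (g A : 'M[C]_2) : Prop :=
  (forall w, image_vec g (pos_side A) w <-> neg_side A w) /\
  (forall w, image_vec g (neg_side A) w <-> pos_side A w).

Definition orientable (d : nat) (A : 'M[C]_2) : Prop :=
  forall g, in_SL2Od d g -> preserves_circle g A -> ~ interchanges_sides g A.

Definition orientable_embedded_tg_surface (d : nat) (A : 'M[C]_2) : Prop :=
  is_circle A /\ embedded d A /\ orientable d A.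

(* F := sigma_r^* A sigma_r equals r [[d X, sqrt(-d) Y], [-sqrt(-d) Y, d Z]] for integers
   X, Y, Z, and det F = -r^2 d N with N = m^2 - d c.  For g in SL(2, O_d) let G := g^T F conj(g),
   the form whose plane is g^-1 H.  Then det G = det F and, because det g = 1, F - G is r d
   times a Hermitian matrix with entries in O_d and integral diagonal, so det (F - G) = r^2 d^2 l
   for an integer l; the parallelogram law gives det (F + G) = -r^2 d (4 N + d l).  As
   0 < 4 N < d, either det (F + G) > 0 or det (F - G) >= 0.
   If G <> F and the planes of F and G met, F + G and F - G would both vanish at a point of H^3,
   forcing det (F + G) <= 0 and det (F - G) <= 0, hence det (F - G) = 0 and F = G.  If g preserved
   the circle and swapped its sides, F + G would vanish at a nonzero point of the circle, so
   det (F + G) <= 0, while F - G would take both signs, so det (F - G) < 0. *)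

From mathcomp Require Import all_boot all_order all_algebra.
From mathcomp Require Import complex Rstruct.
From mathcomp Require Import ring zify.
Set Implicit Arguments. Unset Strict Implicit. Unset Printing Implicit Defensive.
Import Order.TTheory GRing.Theory Num.Theory.
Local Open Scope ring_scope.

Local Notation cj := (@Num.conj C).

(** * Two by two matrices and Hermitian forms *)

Lemma ord2P (i : 'I_2) : i = i0 \/ i = i1.
Proof. by case: i => [[|[|//]]] Hi; [left | right]; apply/val_inj. Qed.

Lemma mx2P (M N : 'M[C]_2) :
  M i0 i0 = N i0 i0 -> M i0 i1 = N i0 i1 -> M i1 i0 = N i1 i0 -> M i1 i1 = N i1 i1 ->
  M = N.
Proof. by move=> *; apply/matrixP => i j; case: (ord2P i) => ->; case: (ord2P j) => ->. Qed.

Lemma mx2_eta (M : 'M[C]_2) : M = mx2 (M i0 i0) (M i0 i1) (M i1 i0) (M i1 i1).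
Proof. by apply: mx2P; rewrite !mxE. Qed.

Lemma mx2_exists (M : 'M[C]_2) : exists a b c e, M = mx2 a b c e.
Proof. by exists (M i0 i0), (M i0 i1), (M i1 i0), (M i1 i1); apply: mx2_eta. Qed.

Lemma sum2 (F : 'I_2 -> C) : \sum_(i < 2) F i = F i0 + F i1.
Proof. by rewrite !big_ord_recl big_ord0 addr0; congr (F _ + F _); apply/val_inj. Qed.

Lemma mulmx2 a b c e a' b' c' e' :
  mx2 a b c e *m mx2 a' b' c' e' =
  mx2 (a * a' + b * c') (a * b' + b * e') (c * a' + e * c') (c * b' + e * e').
Proof. by apply: mx2P; rewrite !mxE sum2 !mxE. Qed.

Lemma trmx2 a b c e : (mx2 a b c e)^T = mx2 a c b e.
Proof. by apply: mx2P; rewrite !mxE. Qed.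

Lemma map_mx2 (f : C -> C) a b c e : map_mx f (mx2 a b c e) = mx2 (f a) (f b) (f c) (f e).
Proof. by apply: mx2P; rewrite !mxE. Qed.

Lemma addmx2 a b c e a' b' c' e' :
  mx2 a b c e + mx2 a' b' c' e' = mx2 (a + a') (b + b') (c + c') (e + e').
Proof. by apply: mx2P; rewrite !mxE. Qed.

Lemma submx2 a b c e a' b' c' e' :
  mx2 a b c e - mx2 a' b' c' e' = mx2 (a - a') (b - b') (c - c') (e - e').
Proof. by apply: mx2P; rewrite !mxE. Qed.

Lemma scalemx2 k a b c e : k *: mx2 a b c e = mx2 (k * a) (k * b) (k * c) (k * e).
Proof. by apply: mx2P; rewrite !mxE. Qed.

Lemma det_mx2 a b c e : \det (mx2 a b c e) = a * e - b * c.
Proof.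
rewrite (expand_det_row _ ord0) sum2 /cofactor !det_mx11 !mxE /=.
by rewrite addn0 add0n expr0 expr1 mul1r; ring.
Qed.

Lemma det_mx2N (M : 'M[C]_2) : \det (- M) = \det M.
Proof.
have [a [b [c [e ->]]]] := mx2_exists M.
rewrite (_ : - _ = mx2 (- a) (- b) (- c) (- e)) ?det_mx2; first by ring.
by apply: mx2P; rewrite !mxE.
Qed.

Lemma det_parallelogram (A B : 'M[C]_2) :
  \det (A + B) + \det (A - B) = 2%:R * \det A + 2%:R * \det B.
Proof. by rewrite (mx2_eta A) (mx2_eta B) addmx2 submx2 !det_mx2; ring. Qed.

Definition cv2 (x y : C) : 'cV[C]_2 := \col_(i < 2) (if i == i0 then x else y).

Lemma cv2_eta (w : 'cV[C]_2) : w = cv2 (w i0 0) (w i1 0).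
Proof. by apply/matrixP => i j; rewrite mxE (ord1 j); case: (ord2P i) => ->. Qed.

Lemma cv2_eq0 x y : (cv2 x y == 0) = (x == 0) && (y == 0).
Proof.
apply/eqP/andP => [E | [/eqP-> /eqP->]].
  by split; apply/eqP; [move/matrixP/(_ i0 0): E | move/matrixP/(_ i1 0): E]; rewrite !mxE.
by apply/matrixP => i j; rewrite !mxE; case: ifP.
Qed.

Lemma hform_cv2 a b c e x y :
  hform (mx2 a b c e) (cv2 x y) = a * x * cj x + b * x * cj y + c * y * cj x + e * y * cj y.
Proof. by rewrite /hform !mxE sum2 !mxE !sum2 !mxE /=; ring. Qed.

Lemma hformZ (A : 'M[C]_2) k w : hform A (k *: w) = k * cj k * hform A w.
Proof.
rewrite (cv2_eta w) (mx2_eta A).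
have -> : k *: cv2 (w i0 0) (w i1 0) = cv2 (k * w i0 0) (k * w i1 0).
  by apply/matrixP => i j; rewrite !mxE; case: ifP.
by rewrite !hform_cv2 !rmorphM; ring.
Qed.

Lemma hformD (A B : 'M[C]_2) w : hform (A + B) w = hform A w + hform B w.
Proof. by rewrite /hform mulmxDr mulmxDl mxE. Qed.

Lemma hformB (A B : 'M[C]_2) w : hform (A - B) w = hform A w - hform B w.
Proof. by rewrite /hform mulmxBr mulmxBl !mxE. Qed.

Lemma ctrmxD (A B : 'M[C]_2) : ctrmx (A + B) = ctrmx A + ctrmx B.
Proof. by apply/matrixP => i j; rewrite !mxE rmorphD. Qed.

Lemma ctrmxB (A B : 'M[C]_2) : ctrmx (A - B) = ctrmx A - ctrmx B.
Proof. by apply/matrixP => i j; rewrite !mxE rmorphB. Qed.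

Lemma hermD (A B : 'M[C]_2) : ctrmx A = A -> ctrmx B = B -> ctrmx (A + B) = A + B.
Proof. by move=> hA hB; rewrite ctrmxD hA hB. Qed.

Lemma hermB (A B : 'M[C]_2) : ctrmx A = A -> ctrmx B = B -> ctrmx (A - B) = A - B.
Proof. by move=> hA hB; rewrite ctrmxB hA hB. Qed.

Lemma ctrmx_mul (A B : 'M[C]_2) : ctrmx (A *m B) = ctrmx B *m ctrmx A.
Proof. by rewrite /ctrmx trmx_mul map_mxM. Qed.

Lemma herm_mx2 (M : 'M[C]_2) : ctrmx M = M ->
  [/\ M = mx2 (M i0 i0) (M i0 i1) (cj (M i0 i1)) (M i1 i1),
      cj (M i0 i0) = M i0 i0 & cj (M i1 i1) = M i1 i1].
Proof.
move=> H; have E i j : cj (M j i) = M i j by rewrite -{2}H !mxE.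
by split; rewrite ?E // {1}(mx2_eta M) -[M i1 i0]E.
Qed.

Definition pullback (g F : 'M[C]_2) : 'M[C]_2 := g^T *m F *m map_mx cj g.

Lemma pullback_mx2 a b c e f0 f1 f2 f3 :
  pullback (mx2 a b c e) (mx2 f0 f1 f2 f3) =
  mx2 (a * f0 * cj a + c * f2 * cj a + a * f1 * cj c + c * f3 * cj c)
      (a * f0 * cj b + c * f2 * cj b + a * f1 * cj e + c * f3 * cj e)
      (b * f0 * cj a + e * f2 * cj a + b * f1 * cj c + e * f3 * cj c)
      (b * f0 * cj b + e * f2 * cj b + b * f1 * cj e + e * f3 * cj e).
Proof. by rewrite /pullback trmx2 map_mx2 !mulmx2; congr mx2; ring. Qed.

Lemma hform_pullback g F w : hform (pullback g F) w = hform F (g *m w).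
Proof. by rewrite /hform trmx_mul map_mxM !mulmxA. Qed.

Lemma det_pullback g F : \det (pullback g F) = \det g * cj (\det g) * \det F.
Proof. by rewrite /pullback !det_mulmx det_tr det_map_mx mulrAC. Qed.

Lemma ctrmx_pullback g F : ctrmx (pullback g F) = pullback g (ctrmx F).
Proof.
rewrite /ctrmx /pullback !trmx_mul !map_mxM trmxK !mulmxA map_trmx.
by congr (_ *m _ *m _); apply/matrixP => i j; rewrite !mxE; apply: conjCK.
Qed.

Lemma pullbackZ g k F : pullback g (k *: F) = k *: pullback g F.
Proof. by rewrite /pullback -scalemxAr -scalemxAl. Qed.

Lemma ctrmx_mul_pullback (S A : 'M[C]_2) : ctrmx S *m A *m S = pullback (map_mx cj S) A.
Proof.
rewrite /pullback /ctrmx map_trmx; congr (_ *m _ *m _).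
by apply/matrixP => i j; rewrite !mxE conjCK.
Qed.

Lemma hform_pullback_adj S A y :
  hform (pullback S A) (\adj S *m y) = \det S * cj (\det S) * hform A y.
Proof. by rewrite hform_pullback mulmxA mul_mx_adj mul_scalar_mx hformZ. Qed.

(** * The ring of integers O_d *)

Section IntegersOfQsqrtmd.
Variable d : nat.
Local Notation dl := (sqrt_md d).
Local Notation w := (omega d).

Lemma sqrt_md_sqr : dl * dl = - d%:R.
Proof. by rewrite -expr2 sqrtCK. Qed.

Lemma conj_sqrt_md : cj dl = - dl.
Proof.
have : (cj dl - dl) * (cj dl + dl) = 0.
  have E : cj dl * cj dl = dl * dl by rewrite -rmorphM sqrt_md_sqr rmorphN rmorph_nat.
  by rewrite mulrDr !mulrBl E [dl * cj dl]mulrC; ring.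
move/eqP; rewrite mulf_eq0 subr_eq0 addr_eq0 => /orP[/eqP real_dl | /eqP //].
have : 0 <= dl * cj dl by apply: mul_conjC_ge0.
rewrite real_dl sqrt_md_sqr oppr_ge0 lern0 => /eqP d0.
by rewrite /sqrt_md d0 oppr0 sqrtC0 oppr0.
Qed.

Lemma omega_tr_norm : exists t n : int, w + cj w = t%:~R /\ w * cj w = n%:~R.
Proof.
rewrite /omega; case: ifP => [/eqP d3 | _].
- have Hd : (d%:R : C) = 4%:R * (d %/ 4)%:R + 3%:R by rewrite {1}(divn_eq d 4) d3 natrD natrM mulrC.
  exists 1, ((d %/ 4)%:Z + 1); rewrite rmorphM rmorphD fmorphV /= rmorph1 rmorph_nat conj_sqrt_md.
  split; first by field.
  rewrite intrD /=; apply: (@eq_trans _ _ ((1 - dl * dl) / 4%:R)); first by field.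
  by rewrite sqrt_md_sqr Hd; field.
- exists 0, d%:Z; rewrite conj_sqrt_md mulrN sqrt_md_sqr opprK.
  by split; first rewrite subrr.
Qed.

Lemma omega_sub_conj : exists e : int, w - cj w = e%:~R * dl.
Proof.
rewrite /omega; case: ifP => _.
- exists 1; rewrite rmorphM rmorphD fmorphV /= rmorph1 rmorph_nat conj_sqrt_md.
  by field.
- by exists 2; rewrite conj_sqrt_md opprK mulr2n mulrDl mul1r.
Qed.

Lemma Od_int (n : int) : in_Od d n%:~R.
Proof. by exists n, 0; rewrite mul0r addr0. Qed.

Lemma Od_add x y : in_Od d x -> in_Od d y -> in_Od d (x + y).
Proof. by move=> [a [b ->]] [a' [b' ->]]; exists (a + a'), (b + b'); rewrite !intrD; ring. Qed.

Lemma Od_opp x : in_Od d x -> in_Od d (- x).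
Proof. by move=> [a [b ->]]; exists (- a), (- b); rewrite !intrN; ring. Qed.

Lemma Od_sub x y : in_Od d x -> in_Od d y -> in_Od d (x - y).
Proof. by move=> Hx /Od_opp; apply: Od_add. Qed.

Lemma Od_mul x y : in_Od d x -> in_Od d y -> in_Od d (x * y).
Proof.
move=> [a [b ->]] [a' [b' ->]]; have [t [n [Ht Hn]]] := omega_tr_norm.
have w2 : w * w = t%:~R * w - n%:~R by rewrite -Ht -Hn; ring.
exists (a * a' - b * b' * n), (a * b' + a' * b + b * b' * t); rewrite !(intrD, intrN, intrM).
transitivity (a%:~R * a'%:~R + (a%:~R * b'%:~R + a'%:~R * b%:~R) * w
              + b%:~R * b'%:~R * (w * w) : C).
  by ring.
by rewrite w2; ring.
Qed.

Lemma Od_conj x : in_Od d x -> in_Od d (cj x).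
Proof.
move=> [a [b ->]]; have [t [n [Ht _]]] := omega_tr_norm.
exists (a + b * t), (- b); rewrite rmorphD rmorphM /= !rmorph_int !(intrD, intrN, intrM).
by rewrite (_ : cj w = t%:~R - w); [ring | rewrite -Ht; ring].
Qed.

Lemma Od_norm x : in_Od d x -> exists n : int, x * cj x = n%:~R.
Proof.
move=> [a [b ->]]; have [t [n [Ht Hn]]] := omega_tr_norm.
exists (a * a + a * b * t + b * b * n); rewrite rmorphD rmorphM /= !rmorph_int !(intrD, intrM).
transitivity (a%:~R * a%:~R + a%:~R * b%:~R * (w + cj w) + b%:~R * b%:~R * (w * cj w) : C).
  by ring.
by rewrite Ht Hn.
Qed.

Lemma Od_sub_conj x : in_Od d x -> exists e : int, x - cj x = e%:~R * dl.
Proof.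
move=> [a [b ->]]; have [e He] := omega_sub_conj.
exists (b * e); rewrite rmorphD rmorphM /= !rmorph_int intrM.
by transitivity (b%:~R * (w - cj w) : C); [ring | rewrite He; ring].
Qed.

End IntegersOfQsqrtmd.

Section Congruence.
Variable d : nat.
Local Notation dl := (sqrt_md d).

Definition dform (x y z : int) : 'M[C]_2 :=
  mx2 (d%:R * x%:~R) (dl * y%:~R) (- (dl * y%:~R)) (d%:R * z%:~R).

Lemma dform_herm x y z : ctrmx (dform x y z) = dform x y z.
Proof.
rewrite /ctrmx trmx2 map_mx2 /dform !rmorphM rmorphN rmorphM /= conj_sqrt_md !rmorph_int rmorph_nat.
by congr mx2; ring.
Qed.

Lemma hform_dform_Od x y z p q : in_Od d p -> in_Od d q ->
  exists k : int, hform (dform x y z) (cv2 p q) = d%:R * k%:~R.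
Proof.
move=> Op Oq; have [np Np] := Od_norm Op; have [nq Nq] := Od_norm Oq.
have [e Ee] := Od_sub_conj (Od_mul Op (Od_conj Oq)); rewrite rmorphM /= conjCK in Ee.
exists (x * np + z * nq - y * e); rewrite /dform hform_cv2.
transitivity (d%:R * x%:~R * (p * cj p) + d%:R * z%:~R * (q * cj q)
              + dl * y%:~R * (p * cj q - cj p * q)); first by ring.
by rewrite Np Nq Ee !(intrD, intrB, intrM); ring: (sqrt_md_sqr d).
Qed.

(* The off-diagonal entry is congruent to [sqrt_md d * y] modulo [d] because [\det g = 1]
   and [g] is congruent to its conjugate modulo [sqrt_md d]. *)
Lemma det_pullback_sub_dform (x y z : int) g : in_SL2Od d g ->
  exists l : int, \det (pullback g (dform x y z) - dform x y z) = (d%:Z * d%:Z * l)%:~R.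
Proof.
move=> [Og detg]; set M := pullback g _ - _.
have hermM : ctrmx M = M by apply: hermB; rewrite ?ctrmx_pullback dform_herm.
have [-> _ _] := herm_mx2 hermM; rewrite det_mx2 /M {M hermM}.
have [a [b [c [e Eg]]]] := mx2_exists g; subst g; rewrite det_mx2 in detg.
have [Oa Ob Oc Oe] : [/\ in_Od d a, in_Od d b, in_Od d c & in_Od d e].
  by split; [move: (Og i0 i0) | move: (Og i0 i1) | move: (Og i1 i0) | move: (Og i1 i1)];
     rewrite mxE.
have [k0 K0] := hform_dform_Od x y z Oa Oc; have [k1 K1] := hform_dform_Od x y z Ob Oe.
have [eb Eb] := Od_sub_conj Ob; have [ee Ee] := Od_sub_conj Oe.
pose w := x%:~R * a * cj b + z%:~R * c * cj e - y%:~R * (c * eb%:~R - a * ee%:~R).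
have Ow : in_Od d w.
  have Oint := Od_int d.
  exact: Od_sub (Od_add (Od_mul (Od_mul (Oint x) Oa) (Od_conj Ob))
                        (Od_mul (Od_mul (Oint z) Oc) (Od_conj Oe)))
                (Od_mul (Oint y) (Od_sub (Od_mul Oc (Oint eb)) (Od_mul Oa (Oint ee)))).
have [n Nw] := Od_norm Ow.
rewrite /dform pullback_mx2 !mxE /=.
have M00 : a * (d%:R * x%:~R) * cj a + c * - (dl * y%:~R) * cj a + a * (dl * y%:~R) * cj c
    + c * (d%:R * z%:~R) * cj c - d%:R * x%:~R = d%:R * (k0 - x)%:~R.
  by rewrite intrB mulrBr -K0 /dform hform_cv2; ring.
have M11 : b * (d%:R * x%:~R) * cj b + e * - (dl * y%:~R) * cj b + b * (dl * y%:~R) * cj e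
    + e * (d%:R * z%:~R) * cj e - d%:R * z%:~R = d%:R * (k1 - z)%:~R.
  by rewrite intrB mulrBr -K1 /dform hform_cv2; ring.
have M01 : a * (d%:R * x%:~R) * cj b + c * - (dl * y%:~R) * cj b + a * (dl * y%:~R) * cj e
    + c * (d%:R * z%:~R) * cj e - dl * y%:~R = d%:R * w.
  transitivity (d%:R * (x%:~R * a * cj b + z%:~R * c * cj e)
                + dl * y%:~R * ((a * e - b * c) - a * (e - cj e) + c * (b - cj b)) - dl * y%:~R).
    by ring.
  by rewrite detg Ee Eb /w; ring: (sqrt_md_sqr d).
exists ((k0 - x) * (k1 - z) - n).
by rewrite M00 M11 M01 rmorphM /= rmorph_nat !(intrB, intrM); ring: Nw.
Qed.
End Congruence.

(** * The Poincare extension *)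

(* A point (z, t) of H^3 is encoded by a positive Hermitian matrix on which the Poincare
   extension of g acts linearly, as X |-> g X g^* up to the positive factor [act_den g p];
   [plane A] is the zero set of the linear form [plane_form A]. *)
Definition point_mx (p : point) : 'M[C]_2 := mx2 (p.1 * cj p.1 + p.2 ^+ 2) p.1 (cj p.1) 1.

Definition act_den (g : 'M[C]_2) (p : point) : C :=
  (g i1 i0 * p.1 + g i1 i1) * cj (g i1 i0 * p.1 + g i1 i1) + g i1 i0 * cj (g i1 i0) * p.2 ^+ 2.

Definition plane_form (A : 'M[C]_2) (p : point) : C := \tr (A *m (point_mx p)^T).

Lemma planeE A p : plane A p <-> inH3 p /\ plane_form A p = 0.
Proof.
suff -> : plane_form A p = A i0 i0 * (p.1 * cj p.1 + p.2 ^+ 2) + A i1 i0 * cj p.1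
                           + A i0 i1 * p.1 + A i1 i1 by [].
by rewrite /plane_form {1}(mx2_eta A) /point_mx trmx2 mulmx2 /mxtrace sum2 !mxE /=; ring.
Qed.

Lemma plane_formD A B p : plane_form (A + B) p = plane_form A p + plane_form B p.
Proof. by rewrite /plane_form mulmxDl mxtraceD. Qed.

Lemma plane_formB A B p : plane_form (A - B) p = plane_form A p - plane_form B p.
Proof. by rewrite /plane_form mulmxBl raddfB. Qed.

Lemma planeD A B p : plane A p -> plane B p -> plane (A + B) p.
Proof. by rewrite !planeE plane_formD => -[Hp ->] [_ ->]; rewrite addr0. Qed.

Lemma planeB A B p : plane A p -> plane B p -> plane (A - B) p.
Proof. by rewrite !planeE plane_formB => -[Hp ->] [_ ->]; rewrite subr0. Qed.

Lemma act_den_gt0 g p : \det g = 1 -> inH3 p -> 0 < act_den g p.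
Proof.
have [a [b [c [e ->]]]] := mx2_exists g; case: p => z t.
rewrite det_mx2 /inH3 /act_den !mxE /= => detg t_gt0.
have [c0 | c_neq0] := eqVneq c 0.
  rewrite c0 !mul0r !add0r addr0 mul_conjC_gt0; apply/eqP => e0.
  by move: detg; rewrite c0 e0 !mulr0 subrr => /esym/eqP; rewrite oner_eq0.
apply: ltr_wpDl; first exact: mul_conjC_ge0.
by apply: mulr_gt0; [rewrite mul_conjC_gt0 | rewrite exprn_gt0].
Qed.

Lemma act_inH3 g p : \det g = 1 -> inH3 p -> inH3 (act g p).
Proof. by move=> detg Hp; rewrite /inH3 /= divr_gt0 // (act_den_gt0 detg Hp). Qed.

Lemma point_mx_act g p : \det g = 1 -> inH3 p ->
  act_den g p *: point_mx (act g p) = g *m point_mx p *m ctrmx g.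
Proof.
move=> detg Hp; move: (act_den_gt0 detg Hp).
have [a [b [c [e Eg]]]] := mx2_exists g; subst g; case: p Hp => z t /= t_gt0.
rewrite det_mx2 in detg; rewrite /act_den /act !mxE /= => D_gt0.
have ct : cj t = t := geC0_conj (ltW t_gt0).
set D := _ + _ in D_gt0 *; set N := _ + _ * t ^+ 2.
have cD : cj D = D := geC0_conj (ltW D_gt0).
have D_neq0 : D != 0 := lt0r_neq0 D_gt0.
have key : N * cj N + t ^+ 2 = ((a * z + b) * cj (a * z + b) + a * cj a * t ^+ 2) * D.
  have detg_norm : (a * e - b * c) * cj (a * e - b * c) = 1 by rewrite detg rmorph1 mulr1.
  rewrite -[t ^+ 2 in LHS]mul1r -detg_norm /N /D.
  by rewrite !(rmorphM, rmorphD, rmorphB) /= !conjCK ct; ring.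
rewrite /ctrmx trmx2 map_mx2 /point_mx !mulmx2 scalemx2 /=.
have cjN : cj (N / D) = cj N / D by rewrite rmorphM fmorphV /= cD.
congr mx2; rewrite ?cjN; last 3 first.
- by rewrite mulrC divfK // /N !(rmorphM, rmorphD) /=; ring.
- by rewrite mulrC divfK // /N !(rmorphM, rmorphD, rmorphXn) /= !conjCK ct; ring.
- by rewrite mulr1 /D !(rmorphM, rmorphD) /=; ring.
transitivity ((N * cj N + t ^+ 2) / D); first by field.
by rewrite key mulfK // !(rmorphM, rmorphD) /=; ring.
Qed.

Lemma point_mx_inj p q : inH3 p -> inH3 q -> point_mx p = point_mx q -> p = q.
Proof.
case: p q => [z t] [z' t']; rewrite /inH3 /= => t_gt0 t'_gt0 /matrixP E.
have z_eq : z = z' by move: (E i0 i1); rewrite !mxE.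
have : t ^+ 2 == t' ^+ 2.
  by move: (E i0 i0); rewrite !mxE /= z_eq => /addrI ->.
by rewrite eqrXn2 ?ltW // => /eqP t_eq; rewrite z_eq t_eq.
Qed.

Lemma act1 p : act 1%:M p = p.
Proof. by case: p => z t; rewrite /act !mxE /= rmorph1 rmorph0; congr pair; field. Qed.

Lemma act_mul g h p : \det g = 1 -> \det h = 1 -> inH3 p ->
  act g (act h p) = act (g *m h) p.
Proof.
move=> detg deth Hp; have detgh : \det (g *m h) = 1 by rewrite det_mulmx detg deth mulr1.
have Hq := act_inH3 deth Hp.
have Xg := point_mx_act detg Hq; have Xh := point_mx_act deth Hp.
have Xgh := point_mx_act detgh Hp.
have E : (act_den h p * act_den g (act h p)) *: point_mx (act g (act h p))
         = act_den (g *m h) p *: point_mx (act (g *m h) p).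
  by rewrite -scalerA Xg scalemxAl scalemxAr Xh Xgh ctrmx_mul !mulmxA.
have Eden : act_den h p * act_den g (act h p) = act_den (g *m h) p.
  by move/matrixP/(_ i1 i1): E; rewrite !mxE !mulr1.
rewrite Eden in E; apply: point_mx_inj; try exact: act_inH3.
exact: (scalerI (lt0r_neq0 (act_den_gt0 detgh Hp))) E.
Qed.

Lemma act_invmx g q : \det g = 1 -> inH3 q -> act g (act (invmx g) q) = q.
Proof.
move=> detg Hq; have unit_g : g \in unitmx by rewrite unitmxE detg unitr1.
by rewrite act_mul ?mulmxV ?act1 // det_inv detg invr1.
Qed.

Lemma plane_form_act F g p : \det g = 1 -> inH3 p ->
  act_den g p * plane_form F (act g p) = plane_form (pullback g F) p.
Proof.
move=> detg Hp; rewrite /plane_form -mxtraceZ scalemxAr -linearZ /= point_mx_act //.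
rewrite !trmx_mul /ctrmx map_trmx trmxK /pullback -!mulmxA [RHS]mxtrace_mulC.
by rewrite !mulmxA.
Qed.

Lemma plane_act F g p : \det g = 1 -> inH3 p ->
  plane F (act g p) <-> plane (pullback g F) p.
Proof.
move=> detg Hp; rewrite !planeE -plane_form_act //.
have D_neq0 := lt0r_neq0 (act_den_gt0 detg Hp).
split=> [[_ ->] | [_ /eqP]]; first by rewrite mulr0.
by rewrite mulf_eq0 (negbTE D_neq0) => /eqP; split => //; apply: act_inH3.
Qed.

Lemma image_plane_pullback F g q : \det g = 1 ->
  image_pt g (plane (pullback g F)) q <-> plane F q.
Proof.
move=> detg; split=> [[p [Hp ->]] | Hq].
  by apply/plane_act => //; case: Hp.
have Hq3 : inH3 q by case: Hq.
have detg' : \det (invmx g) = 1 by rewrite det_inv detg invr1.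
exists (act (invmx g) q); rewrite act_invmx //; split => //.
have Hp : inH3 (act (invmx g) q) by apply: act_inH3.
by apply/(plane_act _ detg Hp); rewrite act_invmx.
Qed.

(** * Signs of Hermitian forms *)

Section HermitianForms.
Variables (h0 h1 h3 : C).
Hypotheses (h0_real : cj h0 = h0) (h3_real : cj h3 = h3).
Local Notation M := (mx2 h0 h1 (cj h1) h3).

Lemma hform_herm_sqr x y :
  h0 * hform M (cv2 x y) = (h0 * x + cj h1 * y) * cj (h0 * x + cj h1 * y) + \det M * (y * cj y).
Proof. by rewrite hform_cv2 det_mx2 !(rmorphM, rmorphD) /= conjCK h0_real; ring. Qed.

Lemma herm_plane_det_mx2 z t : plane M (z, t) ->
  \det M <= 0 /\ (\det M = 0 -> [/\ h0 = 0, h1 = 0 & h3 = 0]).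
Proof.
rewrite /plane /inH3 !mxE /= => -[t_gt0 eq0].
have E : \det M = - ((h0 * z + cj h1) * cj (h0 * z + cj h1) + h0 * cj h0 * t ^+ 2).
  apply/eqP; rewrite -subr_eq0 -[0](mulr0 h0) -eq0 det_mx2.
  by rewrite !(rmorphM, rmorphD) /= conjCK h0_real; apply/eqP; ring.
have t2_gt0 : 0 < t ^+ 2 by rewrite exprn_gt0.
have sq_ge0 := mul_conjC_ge0 (h0 * z + cj h1).
have ht_ge0 : 0 <= h0 * cj h0 * t ^+ 2 by rewrite mulr_ge0 ?mul_conjC_ge0 ?ltW.
rewrite E oppr_le0 addr_ge0 //; split => // /eqP.
rewrite oppr_eq0 paddr_eq0 // => /andP[/eqP sq0 /eqP ht0].
have h00 : h0 = 0.
  by apply/eqP; move/eqP: ht0; rewrite mulf_eq0 (gt_eqF t2_gt0) orbF mul_conjC_eq0.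
have h10 : h1 = 0.
  apply/eqP; rewrite -(conjC_eq0 h1) -mul_conjC_eq0.
  by move/eqP: sq0; rewrite h00 mul0r add0r.
by move: eq0; rewrite h00 h10 rmorph0 !mul0r !add0r.
Qed.

Lemma herm_det_gt0_anisotropic_mx2 x y : 0 < \det M -> hform M (cv2 x y) = 0 -> x = 0 /\ y = 0.
Proof.
move=> det_gt0 form0.
have h0_neq0 : h0 != 0.
  apply: contraTneq det_gt0 => ->.
  by rewrite det_mx2 mul0r sub0r oppr_gt0 (le_gtF (mul_conjC_ge0 h1)).
have det_y_ge0 : 0 <= \det M * (y * cj y) by rewrite mulr_ge0 ?mul_conjC_ge0 ?ltW.
move/eqP: (hform_herm_sqr x y); rewrite form0 mulr0 eq_sym paddr_eq0 ?mul_conjC_ge0 //.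
rewrite mul_conjC_eq0 mulf_eq0 (gt_eqF det_gt0) mul_conjC_eq0 => /andP[/eqP sq0 /eqP y0].
by move: sq0; rewrite y0 mulr0 addr0 => /eqP; rewrite mulf_eq0 (negbTE h0_neq0) => /eqP.
Qed.

Lemma herm_det_ge0_hform_mul_ge0_mx2 w w' : 0 <= \det M -> 0 <= hform M w * hform M w'.
Proof.
move=> det_ge0; rewrite (cv2_eta w) (cv2_eta w').
have [h00 | h0_neq0] := eqVneq h0 0.
  have h10 : h1 = 0.
    apply/eqP; rewrite -mul_conjC_eq0 eq_le mul_conjC_ge0 andbT -oppr_ge0.
    by move: det_ge0; rewrite det_mx2 h00 mul0r sub0r.
  rewrite !hform_cv2 h00 h10 rmorph0 !mul0r !add0r.
  set y := w i1 0; set y' := w' i1 0.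
  rewrite (_ : _ * _ = h3 * cj h3 * ((y * cj y) * (y' * cj y'))); last by rewrite h3_real; ring.
  by apply: mulr_ge0; [|apply: mulr_ge0]; apply: mul_conjC_ge0.
have sq_ge0 x y : 0 <= h0 * hform M (cv2 x y).
  by rewrite hform_herm_sqr; apply: addr_ge0; [|apply: mulr_ge0]; rewrite ?mul_conjC_ge0.
have := mulr_ge0 (sq_ge0 (w i0 0) (w i1 0)) (sq_ge0 (w' i0 0) (w' i1 0)).
rewrite mulrACA -{2}h0_real pmulr_rge0 // mul_conjC_gt0 //.
Qed.

End HermitianForms.

Lemma herm_plane_det (M : 'M[C]_2) p : ctrmx M = M -> plane M p ->
  \det M <= 0 /\ (\det M = 0 -> M = 0).
Proof.
move=> /herm_mx2[EM h0_real _]; rewrite EM; case: p => z t.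
move: (M i0 i0) (M i0 i1) (M i1 i1) h0_real => h0 h1 h3 h0_real Hp.
have [-> det0] := herm_plane_det_mx2 h0_real Hp; split => // /det0[-> -> ->].
by rewrite rmorph0; apply: mx2P; rewrite !mxE.
Qed.

Lemma herm_det_gt0_anisotropic (M : 'M[C]_2) w :
  ctrmx M = M -> 0 < \det M -> hform M w = 0 -> w = 0.
Proof.
move=> /herm_mx2[EM h0_real _]; rewrite EM (cv2_eta w).
move: (M i0 i0) (M i0 i1) (M i1 i1) h0_real => h0 h1 h3 h0_real det_gt0 form0.
have [-> ->] := herm_det_gt0_anisotropic_mx2 h0_real det_gt0 form0.
by apply/eqP; rewrite cv2_eq0 eqxx.
Qed.

Lemma herm_det_ge0_hform_mul_ge0 (M : 'M[C]_2) w w' : ctrmx M = M -> 0 <= \det M ->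
  0 <= hform M w * hform M w'.
Proof.
move=> /herm_mx2[EM h0_real h3_real]; rewrite EM.
exact: herm_det_ge0_hform_mul_ge0_mx2.
Qed.

Definition indefinite (A : 'M[C]_2) : Prop :=
  exists wp wn w0, [/\ pos_side A wp, neg_side A wn & on_circle A w0].

Lemma herm_indefinite (a b e : C) : 0 < a -> a * e - b * cj b < 0 -> indefinite (mx2 a b (cj b) e).
Proof.
move=> a_gt0 det_lt0; have a_real : cj a = a := geC0_conj (ltW a_gt0).
have a_neq0 := lt0r_neq0 a_gt0; rewrite -(det_mx2 a b (cj b) e) in det_lt0.
have [s [s_real s2]] : exists s, cj s = s /\ s * s = - \det (mx2 a b (cj b) e).
  exists (sqrtC (- \det (mx2 a b (cj b) e))); rewrite -expr2 sqrtCK; split => //.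
  by rewrite geC0_conj // sqrtC_ge0 oppr_ge0 ltW.
have cv2_neq0 x : cv2 x a != 0 by rewrite cv2_eq0 negb_and a_neq0 orbT.
exists (cv2 1 0), (cv2 (- cj b) a), (cv2 (s - cj b) a); split; split => //.
- by rewrite cv2_eq0 oner_eq0.
- by rewrite hform_cv2 !(rmorph0, rmorph1) !(mulr0, mul0r, mulr1, addr0).
- rewrite -(pmulr_rlt0 _ a_gt0) hform_herm_sqr // (_ : _ + _ * a = 0); last by ring.
  by rewrite mul0r add0r a_real nmulr_rlt0 ?mulr_gt0.
- apply: (mulfI a_neq0); rewrite mulr0 hform_herm_sqr // (_ : _ + _ * a = a * s); last by ring.
  rewrite rmorphM /= a_real s_real (_ : a * s * (a * s) = a * a * (s * s)); last by ring.
  by rewrite s2; ring.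
Qed.

Lemma indefinite_pullback S A : \det S != 0 -> indefinite A -> indefinite (pullback S A).
Proof.
move=> detS_neq0 [wp [wn [w0 [[wp0 Ap] [wn0 An] [w00 A0]]]]].
have k_gt0 : 0 < \det S * cj (\det S) by rewrite mul_conjC_gt0.
have adj_neq0 (w : 'cV[C]_2) : w != 0 -> \adj S *m w != 0.
  apply: contra_neq => Sw0; apply: (scalerI detS_neq0).
  by rewrite -mul_scalar_mx -mul_mx_adj -mulmxA Sw0 !mulmx0 scaler0.
exists (\adj S *m wp), (\adj S *m wn), (\adj S *m w0).
by split; split; rewrite ?adj_neq0 // hform_pullback_adj
   ?(pmulr_rgt0 _ k_gt0) ?(pmulr_rlt0 _ k_gt0) ?A0 ?mulr0.
Qed.

(** * Embeddedness and orientability *)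

Lemma det_dichotomy (F G : 'M[C]_2) (D e l : int) :
  \det G = \det F -> \det F = (- D)%:~R -> \det (F - G) = (e * l)%:~R -> 0 <= e -> 4 * D < e ->
  0 < \det (F + G) \/ 0 <= \det (F - G).
Proof.
move=> detG detF detFG e_ge0 De.
have detFpG : \det (F + G) = (- (4 * D) - e * l)%:~R.
  apply: (addIr (\det (F - G))); rewrite det_parallelogram detG detF detFG -!intrD.
  by rewrite -[2%:R]/(2%:~R) -intrM -intrD; congr intr; ring.
have [l_lt0 | l_ge0] := ltP l 0; [left | right].
  by rewrite detFpG ltr0z; nia.
by rewrite detFG ler0z mulr_ge0.
Qed.

Section Rigidity.
Variables (d : nat) (F : 'M[C]_2).
Hypothesis F_herm : ctrmx F = F.
Hypothesis F_dichotomy : forall g, in_SL2Od d g ->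
  0 < \det (F + pullback g F) \/ 0 <= \det (F - pullback g F).

Let pullback_herm g : ctrmx (pullback g F) = pullback g F.
Proof. by rewrite ctrmx_pullback F_herm. Qed.

Lemma embedded_of_dichotomy : embedded d F.
Proof.
move=> g Hg; have detg := proj2 Hg.
have [GF | GF] := eqVneq (pullback g F) F.
  by left => q; rewrite -{1}GF; apply: image_plane_pullback.
right=> q [[p [Hp ->]] /(plane_act _ detg (proj1 Hp)) HpG].
have [detD _] := herm_plane_det (hermD F_herm (pullback_herm g)) (planeD Hp HpG).
have [detB detB0] := herm_plane_det (hermB F_herm (pullback_herm g)) (planeB Hp HpG).
move: GF; rewrite eq_sym -subr_eq0 => /eqP; apply; apply: detB0.
case: (F_dichotomy Hg) => [detD' | detB']; first by have := lt_le_trans detD' detD; rewrite ltxx.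
by apply/le_anti; rewrite detB detB'.
Qed.

Lemma orientable_of_dichotomy : indefinite F -> orientable d F.
Proof.
move=> [wp [wn [w0 [[wp0 Fp] [wn0 Fn] [w00 F0]]]]] g Hg pres [pos_neg neg_pos].
have img S w : S w -> image_vec g S (g *m w) by exists w.
have Gp : hform (pullback g F) wp < 0.
  by rewrite hform_pullback; case: ((pos_neg _).1 (img _ _ (conj wp0 Fp))).
have Gn : 0 < hform (pullback g F) wn.
  by rewrite hform_pullback; case: ((neg_pos _).1 (img _ _ (conj wn0 Fn))).
have G0 : hform (pullback g F) w0 = 0.
  by rewrite hform_pullback; case: ((pres _).1 (img _ _ (conj w00 F0))).
case: (F_dichotomy Hg) => [detD | detB].
  have := herm_det_gt0_anisotropic (w := w0) (hermD F_herm (pullback_herm g)) detD.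
  by rewrite hformD F0 G0 addr0 => /(_ erefl) /eqP; rewrite (negbTE w00).
have FGp : 0 < hform F wp - hform (pullback g F) wp by rewrite subr_gt0 (lt_trans Gp Fp).
have FGn : hform F wn - hform (pullback g F) wn < 0 by rewrite subr_lt0 (lt_trans Fn Gn).
have := herm_det_ge0_hform_mul_ge0 wp wn (hermB F_herm (pullback_herm g)) detB.
by rewrite !hformB => /le_gtF; rewrite pmulr_rlt0 // FGn.
Qed.
End Rigidity.

(** * The surface of sigma_r^* A sigma_r *)

Section Proposition.
Variables (d r : nat) (u v m c : int).
Local Notation s' := (d %/ r)%N.
Local Notation dl := (sqrt_md d).
Local Notation N := (m * m - d%:Z * c).
Local Notation X := (s'%:Z + 2 * m * v + c * v * v * r%:Z).
Local Notation Y := (- d%:Z + m * u * s'%:Z + d%:Z * c * u * v - m * v * r%:Z).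
Local Notation Z := (r%:Z - 2 * m * u + s'%:Z * c * u * u).
Hypotheses (d_gt0 : (0 < d)%N) (r_gt0 : (0 < r)%N) (d_eq : d = (s' * r)%N).
Hypotheses (uv_eq : u * s'%:Z + v * r%:Z + 1 = 0) (N_gt0 : 0 < N) (N_lt : 4 * N < d%:Z).

Local Notation sigma := (mx2 dl r%:R (v * r%:Z)%:~R (u%:~R * dl)).
Local Notation A := (mx2 d%:R (m%:~R * dl) (- (m%:~R * dl)) (d%:R * c%:~R)).
Local Notation F := (ctrmx sigma *m A *m sigma).

Lemma F_dform : F = r%:R *: dform d X Y Z.
Proof.
have dl2 : dl * dl = - (s'%:R * r%:R) by rewrite sqrt_md_sqr {1}d_eq natrM.
have dZ : d%:Z = s'%:Z * r%:Z by rewrite {1}d_eq.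
rewrite /ctrmx trmx2 map_mx2 /dform scalemx2 !mulmx2 !(rmorphM, rmorphN) /= conj_sqrt_md.
rewrite !rmorph_int -[d%:R]/(d%:Z%:~R) dZ.
by congr mx2; rewrite !(intrD, intrB, intrM, intrN); ring: dl2.
Qed.

Lemma A_herm : ctrmx A = A.
Proof.
rewrite /ctrmx trmx2 map_mx2 !(rmorphM, rmorphN) /= conj_sqrt_md !rmorph_int.
by congr mx2; ring.
Qed.

Lemma det_A : \det A = (- (d%:Z * N))%:~R.
Proof. by rewrite det_mx2 !(intrN, intrB, intrM); ring: (sqrt_md_sqr d). Qed.

Lemma det_sigma : \det sigma = r%:R.
Proof.
have dl2 : dl * dl = - (s'%:R * r%:R) by rewrite sqrt_md_sqr {1}d_eq natrM.
have uvC : u%:~R * s'%:R = - (1 + v%:~R * r%:R) :> C.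
  have -> : (- (1 + v%:~R * r%:R) : C) = (- (1 + v * r%:Z))%:~R by rewrite intrN intrD intrM.
  by rewrite -[s'%:R]/(s'%:Z%:~R) -intrM; congr intr; lia.
by rewrite det_mx2 intrM; ring: dl2 uvC.
Qed.

Lemma det_F : \det F = (- (r%:Z * r%:Z * (d%:Z * N)))%:~R.
Proof.
rewrite !det_mulmx /ctrmx det_map_mx det_tr det_sigma det_A rmorph_nat.
by rewrite !(intrN, intrM); ring.
Qed.

Lemma F_herm : ctrmx F = F.
Proof. by rewrite ctrmx_mul_pullback ctrmx_pullback A_herm. Qed.

Lemma F_dichotomy g : in_SL2Od d g ->
  0 < \det (F + pullback g F) \/ 0 <= \det (F - pullback g F).
Proof.
move=> Hg; have [l Hl] := det_pullback_sub_dform X Y Z Hg.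
apply: (@det_dichotomy _ _ (r%:Z * r%:Z * (d%:Z * N)) (r%:Z * r%:Z * (d%:Z * d%:Z)) l).
- by rewrite det_pullback (proj2 Hg) rmorph1 !mul1r.
- exact: det_F.
- rewrite F_dform pullbackZ -scalerBr -opprB scalerN det_mx2N detZ Hl.
  by rewrite !intrM; ring.
- by rewrite !mulr_ge0.
- have rrd_gt0 : 0 < r%:Z * r%:Z * d%:Z by rewrite !mulr_gt0.
  nia.
Qed.

Lemma F_indefinite : indefinite F.
Proof.
rewrite ctrmx_mul_pullback; apply: indefinite_pullback.
  by rewrite det_map_mx det_sigma rmorph_nat pnatr_eq0 -lt0n.
have cjb : cj (m%:~R * dl) = - (m%:~R * dl) by rewrite rmorphM /= conj_sqrt_md rmorph_int mulrN.
rewrite -cjb; apply: herm_indefinite; first by rewrite ltr0n.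
by rewrite -det_mx2 cjb det_A ltrz0 oppr_lt0 mulr_gt0.
Qed.

Lemma F_orientable_embedded : orientable_embedded_tg_surface d F.
Proof.
split; first by split; [exact: F_herm | rewrite det_F ltrz0 oppr_lt0 !mulr_gt0].
split; first exact: embedded_of_dichotomy F_herm F_dichotomy.
exact: orientable_of_dichotomy F_herm F_dichotomy F_indefinite.
Qed.

End Proposition.

Theorem proposition5p4 (d : nat) (r : nat) (s u v m c : int) :
  (0 < d)%N -> squarefree d ->
  (0 < r)%N -> (r %| d)%N ->
  s = - ((d %/ r)%N)%:Z ->
  u * s - v * r%:Z = 1 ->
  (0 : rat) < m%:~R -> (m%:~R : rat) < d%:R / 2%:R ->
  (0 : rat) < (m ^+ 2 - d%:Z * c)%:~R -> ((m ^+ 2 - d%:Z * c)%:~R : rat) < d%:R / 4%:R ->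
  let sq := sqrt_md d in
  let sigma := mx2 sq r%:R (v * r%:Z)%:~R (u%:~R * sq) in
  let A := mx2 d%:R (m%:~R * sq) (- (m%:~R * sq)) (d%:R * c%:~R) in
  orientable_embedded_tg_surface d (ctrmx sigma *m A *m sigma).
Proof.
move=> d_gt0 _ r_gt0 r_dvd s_eq uv_eq _ _ N_gt0 N_lt sq sigma A.
have d_eq : d = (d %/ r * r)%N by rewrite divnK.
have uv_eq' : u * (d %/ r)%:Z + v * r%:Z + 1 = 0 by rewrite s_eq in uv_eq; lia.
rewrite ltr0z expr2 in N_gt0.
have N_lt' : 4 * (m * m - d%:Z * c) < d%:Z.
  move: N_lt; rewrite ltr_pdivlMr ?ltr0n // -expr2 -[4%:R]/(4%:~R : rat) -intrM.
  by rewrite -[d%:R]/(d%:Z%:~R : rat) ltr_int; lia.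
exact: F_orientable_embedded d_gt0 r_gt0 d_eq uv_eq' N_gt0 N_lt'.
Qed.
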